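(* For all integers $i,N,n$ with $0\le i\le N\le n$, $$\sum_{i_1,i_2}\binom{N}{i_1}\binom{N}{i_2}\binom{i_1}{i}\binom{i_2}{i}(-1)^{i_1+i_2}\,(n-i_1)_{N-i_1}\,(n-i_2)_{N-i_2}\,(n)_{i_1+i_2-i}\;i!=N!\,(n)_N\binom{N}{i}(-1)^{N-i},$$ where the sum is over all integers $i_1,i_2$.
   Context: Convention: the binomial coefficient $\binom{k}{l}$ is defined as the usual binomial coefficient when $k\ge0$, $l\ge0$ and $k\ge l$, and is $0$ otherwise; only terms with $i\le i_1,i_2\le N$ contribute. $(m)_j=m(m-1)\cdots(m-j+1)$ denotes the falling factorial, with $(m)_0=1$. In particular, $(m)_j=0$ when $m$ is a nonnegative integer and $j>m$. *)

From mathcomp Require Import all_boot all_order all_algebra.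
Set Implicit Arguments. Unset Strict Implicit. Unset Printing Implicit Defensive.
(* falling factorial (m)_j is mathcomp's  m ^_ j  (binomial.v) on nat. *)

(* Write i1 = i + a, i2 = i + b and M = N - i.  Trinomial revision and the
   splitting n ^_ (p + q) = n ^_ p * (n - p) ^_ q factor each summand as
   C(N,i)^2 i! (n)_N times [C(M,a) (-1)^a (n-i-a)_b] times
   [C(M,b) (-1)^b (n-i-b)_(M-b)].  Summing over a takes the M-th finite
   difference of the degree-b falling factorial (n-i-a)_b, which vanishes for
   b < M and equals M! for b = M; only b = M survives, and
   C(N,i) i! M! = N! gives the right-hand side. *)
From mathcomp Require Import all_boot all_order all_algebra.
From mathcomp Require Import zify ring.
Import GRing.Theory.
Local Open Scope ring_scope.

Lemma ffactnD (n p q : nat) : (n ^_ (p + q) = n ^_ p * (n - p) ^_ q)%N.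
Proof.
elim: q => [|q IHq]; first by rewrite addn0 ffactn0 muln1.
by rewrite addnS !ffactnSr IHq subnDA mulnA.
Qed.

Lemma ffactS_pascal (y b : nat) : (y.+1 ^_ b.+1 = y ^_ b.+1 + b.+1 * y ^_ b)%N.
Proof.
rewrite ffactSS ffactnSr; have [ltyb | leby] := ltnP y b.
  by rewrite ffact_small // !muln0.
by rewrite mulnC [(b.+1 * _)%N]mulnC -mulnDr; congr (_ * _)%N; lia.
Qed.

Lemma bin_mul_bin (N k i : nat) :
  ('C(N, k + i) * 'C(k + i, i) = 'C(N, i) * 'C(N - i, k))%N.
Proof.
have facts_gt0 : (0 < i`! * k`!)%N by rewrite muln_gt0 !fact_gt0.
apply/eqP; rewrite -(eqn_pmul2r facts_gt0); apply/eqP.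
have binK : ('C(k + i, i) * (i`! * k`!) = (k + i)`!)%N.
  by rewrite -{2}(addnK i k) bin_fact // leq_addl.
rewrite -mulnA binK bin_ffact.
rewrite [RHS](_ : _ = ('C(N, i) * i`!) * ('C(N - i, k) * k`!))%N; last by ring.
by rewrite !bin_ffact addnC ffactnD.
Qed.

Section AlternatingSums.

Variable R : comPzRingType.

Lemma sum_sign_binS (M : nat) (f : nat -> R) :
  \sum_(a < M.+2) 'C(M.+1, a)%:R * (-1) ^+ a * f a =
  \sum_(a < M.+1) 'C(M, a)%:R * (-1) ^+ a * (f a - f a.+1).
Proof.
rewrite big_ord_recl /= bin0.
under eq_bigr => a _ do rewrite /bump /= add1n binS natrD !mulrDl.
rewrite big_split /= big_ord_recr /= bin_small // mul0r mul0r addr0.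
under [in RHS]eq_bigr => a _ do rewrite mulrBr.
rewrite sumrB [X in _ = X - _]big_ord_recl /= bin0 -!addrA; do 2 congr (_ + _).
by rewrite -sumrN; apply: eq_bigr => a _; rewrite exprS; ring.
Qed.

(* An [M]-th finite difference of a falling factorial of degree [b <= M];
   [M <= x] keeps the truncated subtractions [x - a] exact. *)
Lemma sum_sign_bin_ffact (M b x : nat) : (b <= M)%N -> (M <= x)%N ->
  \sum_(a < M.+1) 'C(M, a)%:R * (-1) ^+ a * ((x - a) ^_ b)%:R =
  (b == M)%:R * M`!%:R :> R.
Proof.
elim: M b x => [|M IHM] b x lebM leMx.
  by move: lebM; rewrite leqn0 => /eqP->; rewrite big_ord1 /= bin0 ffactn0 !mul1r.
rewrite (sum_sign_binS M (fun a => ((x - a) ^_ b)%:R)) /=.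
case: b lebM => [|b] lebM.
  by rewrite big1 ?mul0r // => a _; rewrite !ffactn0 subrr mulr0.
transitivity (b.+1%:R * \sum_(a < M.+1) 'C(M, a)%:R * (-1) ^+ a * ((x.-1 - a) ^_ b)%:R : R).
  rewrite mulr_sumr; apply: eq_bigr => a _.
  have lt_aM := ltn_ord a.
  have -> : (x - a = (x.-1 - a).+1)%N by lia.
  have -> : (x - a.+1 = x.-1 - a)%N by lia.
  by rewrite ffactS_pascal natrD natrM; ring.
rewrite IHM ?eqSS; [|lia|lia].
by case: eqP => [->|_] /=; rewrite factS natrM; ring.
Qed.

End AlternatingSums.

Lemma summand_factor (i N n a b : nat) : (i <= N)%N -> (N <= n)%N -> (a <= N - i)%N ->
  ('C(N, a + i) * 'C(N, b + i) * 'C(a + i, i) * 'C(b + i, i) *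
   ((n - (a + i)) ^_ (N - (a + i)) * (n - (b + i)) ^_ (N - (b + i))
    * n ^_ (a + i + (b + i) - i) * i`!)
  = 'C(N, i) ^ 2 * i`! * n ^_ N
    * ('C(N - i, a) * (n - i - a) ^_ b) * ('C(N - i, b) * (n - i - b) ^_ (N - i - b)))%N.
Proof.
move=> leiN leNn leaM.
rewrite [X in (X * _)%N = _](_ : _ =
  ('C(N, a + i) * 'C(a + i, i)) * ('C(N, b + i) * 'C(b + i, i)))%N; last by ring.
rewrite !bin_mul_bin.
have -> : (a + i + (b + i) - i = i + (a + b))%N by lia.
have -> : (n ^_ N = n ^_ i * (n - i) ^_ a * (n - i - a) ^_ (N - i - a))%N.
  by rewrite -mulnA -ffactnD -ffactnD subnKC // subnKC.
rewrite ffactnD ffactnD.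
have -> : (n - (a + i) = n - i - a)%N by lia.
have -> : (n - (b + i) = n - i - b)%N by lia.
have -> : (N - (a + i) = N - i - a)%N by lia.
have -> : (N - (b + i) = N - i - b)%N by lia.
ring.
Qed.

Theorem mainTheorem3 (i N n : nat) (hiN : (i <= N)%N) (hNn : (N <= n)%N) :
  \sum_(i <= i1 < N.+1) \sum_(i <= i2 < N.+1)
     (('C(N, i1) * 'C(N, i2) * 'C(i1, i) * 'C(i2, i))%N%:Z
      * (-1) ^+ (i1 + i2)
      * ((n - i1) ^_ (N - i1) * (n - i2) ^_ (N - i2)
         * n ^_ (i1 + i2 - i) * i`!)%N%:Z)
  = ((N`! * n ^_ N * 'C(N, i))%N%:Z * (-1) ^+ (N - i) :> int).
Proof.
set M := (N - i)%N; set c := ('C(N, i) ^ 2 * i`! * n ^_ N)%N.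
have sum_from_i (F : nat -> int) :
    \sum_(i <= k < N.+1) F k = \sum_(a < M.+1) F (a + i)%N.
  by rewrite -{1}[i]add0n big_addn big_mkord subSn.
have summand (a b : 'I_M.+1) :
    ('C(N, a + i) * 'C(N, b + i) * 'C(a + i, i) * 'C(b + i, i))%N%:Z
      * (-1) ^+ (a + i + (b + i))
      * ((n - (a + i)) ^_ (N - (a + i)) * (n - (b + i)) ^_ (N - (b + i))
         * n ^_ (a + i + (b + i) - i) * i`!)%N%:Z
    = c%:Z * ('C(M, b)%:R * (-1) ^+ b * ((n - i - b) ^_ (M - b))%:R
             * ('C(M, a)%:R * (-1) ^+ a * ((n - i - a) ^_ b)%:R)).
  have sign : (-1) ^+ (a + i + (b + i)) = (-1) ^+ a * (-1) ^+ b :> int.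
    by rewrite addnACA addnn -muln2 exprD exprM sqrr_sign mulr1 exprD.
  rewrite sign mulrAC -PoszM summand_factor //; last by rewrite -ltnS.
  by rewrite !natz !PoszM; ring.
rewrite sum_from_i; under eq_bigr => a _ do rewrite sum_from_i.
under eq_bigr => a _ do under eq_bigr => b _ do rewrite summand.
rewrite exchange_big /=.
have leMx : (M <= n - i)%N by apply: leq_sub2r.
under eq_bigr => b _ do rewrite -!mulr_sumr (sum_sign_bin_ffact _ _ _ _ (leq_ord b) leMx).
rewrite big_ord_recr big1 /= => [|b _]; last first.
  by rewrite (ltn_eqF (ltn_ord b)) mul0r !mulr0.
rewrite eqxx subnn ffactn0 binn add0r -(bin_fact hiN) /c !natz !PoszM /=; ring.
Qed.
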